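(* Let $\tau$ be a critical GW tree ($\mu=1$) with offspring distribution $p$ satisfying ( * ). Let $(\alpha_n,n\in\mathbb N)$ be a sequence of positive integers such that for every $j\in\mathbb N^*$, \[\lim_{n\to\infty}\frac{\mathbb P(\mathcal G_{n-j}(\tau)=\alpha_n)}{\mathbb P(\mathcal G_n(\tau)=\alpha_n)}=1.\] Then the conditional law of $\tau$ given $\{\mathcal G_n(\tau)=\alpha_n\}$ converges in distribution to the law of Kesten's tree $\tau^*$ as $n\to\infty$.
   Context: Trees (Neveu formalism): $\mathcal U=\bigcup_{n\ge0}(\mathbb N^* )^n$, $|u|$ the length of $u$. A tree is $\mathbf t\subset\mathcal U$ with $\emptyset\in\mathbf t$, closed under taking prefixes, and such that for every $u\in\mathbf t$ there is $k_u(\mathbf t)\ge0$ with $ui\in\mathbf t\iff1\le i\le k_u(\mathbf t)$. $\mathcal G_n(\mathbf t)=\mathrm{Card}\{u\in\mathbf t:|u|=n\}$ is the size of generation $n$. $r_h(\mathbf t)=\{u\in\mathbf t:|u|\le h\}$; convergence in distribution of random trees $T_n\to T$ means $\mathbb P(r_h(T_n)=\mathbf t)\to\mathbb P(r_h(T)=\mathbf t)$ for all $h$ and $\mathbf t$. Offspring distribution: a probability $p$ on $\mathbb N$ satisfying ( * ): $p(0)>0$, $p(0)+p(1)<1$, $\mu=\sum_n np(n)<\infty$. A GW tree $\tau$ with offspring distribution $p$ satisfies $\mathbb P(r_h(\tau)=\mathbf t)=\prod_{u\in r_{h-1}(\mathbf t)}p(k_u(\mathbf t))$ for all $h\ge1$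 and trees $\mathbf t$ of height $\le h$. Kesten's tree $\tau^*$ (for $\mu\le1$): with $p^*(n)=np(n)/\mu$, $\tau^*$ is a random tree with a random sequence $(V_k)_{k\ge1}$, $V_1\cdots V_h\in\tau^*$ for all $h$, constructed recursively: given $(V_1,\dots,V_h)$ and $r_h(\tau^* )$, the numbers of children of the vertices $v$ with $|v|=h$ are independent, with law $p$ if $v\ne V_1\cdots V_h$ and $p^*$ if $v=V_1\cdots V_h$; then $V_{h+1}$ is uniform on $\{1,\dots,k_{V_1\cdots V_h}(\tau^* )\}$. *)

From Stdlib Require Import Reals Lra Lia List Bool Arith ClassicalEpsilon.
Import ListNotations.
Open Scope R_scope.

(* Finite ordered rooted trees (plane trees).  A finite Neveu tree is encoded
   as the ordered list of its root's subtrees: vertex u = u1...un corresponds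
   to following the u1-th, ..., un-th child. *)
Inductive tree : Type := Node : list tree -> tree.

Definition leaf : tree := Node [].

Definition Rsum (l : list R) : R := fold_right Rplus 0 l.
Definition Rprod (l : list R) : R := fold_right Rmult 1 l.

Fixpoint tree_eqb (s t : tree) : bool :=
  match s, t with
  | Node ls, Node lt =>
      (fix aux (a b : list tree) : bool :=
         match a, b with
         | [], [] => true
         | x :: a', y :: b' => tree_eqb x y && aux a' b'
         | _, _ => false
         end) ls lt
  end.

Fixpoint restr (h : nat) (t : tree) : tree :=
  match h, t with
  | O, _ => leaf
  | S h', Node l => Node (map (restr h') l)
  end.

Fixpoint gen (n : nat) (t : tree) : nat :=
  match n, t with
  | O, _ => 1%nat
  | S n', Node l => list_sum (map (gen n') l)
  end.

(* P(r_h(tau) = t) for a GW tree with offspring distribution p: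
   product over u in r_{h-1}(t) of p(k_u(t)), and 0 if t has height > h. *)
Fixpoint gw_prob (p : nat -> R) (h : nat) (t : tree) : R :=
  match h, t with
  | O, Node l => (match l with [] => 1 | _ => 0 end)
  | S h', Node l => p (length l) * Rprod (map (gw_prob p h') l)
  end.

Definition pstar (p : nat -> R) (mu : R) (k : nat) : R := INR k * p k / mu.

(* P(r_h(tau^star) = t) for Kesten's tree, obtained by summing over the position
   of the spine the probability given by the recursive construction: the root
   (on the spine) has k children with prob. p*(k), V_1 = i with prob. 1/k, the
   i-th subtree is again Kesten-like and the other subtrees are independent GW
   trees. *)
Fixpoint kesten_prob (p : nat -> R) (mu : R) (h : nat) (t : tree) : R :=
  match h, t with
  | O, Node l => (match l with [] => 1 | _ => 0 end)
  | S h', Node l =>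
      let k := length l in
      Rsum (map (fun i =>
        pstar p mu k * / INR k
        * kesten_prob p mu h' (nth i l leaf)
        * Rprod (map (fun j => gw_prob p h' (nth j l leaf))
                     (filter (fun j => negb (Nat.eqb j i)) (seq 0 k))))
        (seq 0 k))
  end.

Fixpoint lists_of {A : Type} (k : nat) (L : list A) : list (list A) :=
  match k with
  | O => [[]]
  | S k' => flat_map (fun x => map (cons x) (lists_of k' L)) L
  end.

Fixpoint trees_bd (n M : nat) : list tree :=
  match n with
  | O => [leaf]
  | S n' => flat_map (fun k => map Node (lists_of k (trees_bd n' M))) (seq 0 (S M))
  end.

(* P(r_n(tau) in A) for an event A on trees of height <= n:
   the (countable, nonnegative) sum of P(r_n(tau) = s) over s in A, defined as
   the limit as M -> oo of the sum over trees with degrees bounded by M. *)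
Definition gw_event (p : nat -> R) (n : nat) (A : tree -> bool) : R :=
  epsilon (inhabits 0)
    (fun x => Un_cv (fun M => Rsum (map (gw_prob p n) (filter A (trees_bd n M)))) x).

Definition P_gen (p : nat -> R) (n a : nat) : R :=
  gw_event p n (fun s => Nat.eqb (gen n s) a).

(* P(r_h(tau) = t, G_n(tau) = a), both events determined by r_{max n h}(tau) *)
Definition P_joint (p : nat -> R) (n a h : nat) (t : tree) : R :=
  gw_event p (Nat.max n h) (fun s => tree_eqb (restr h s) t && Nat.eqb (gen n s) a).

From Stdlib Require Import Reals List.
From Stdlib Require Import Lra Lia Bool Arith ClassicalEpsilon Classical.
Import ListNotations.
Open Scope R_scope.

(* Write tau for the GW tree and tau^star for Kesten's tree, and fix h and a tree t.
   1. Size bias (mu = 1): P(r_h(tau^star) = t) = G_h(t) P(r_h(tau) = t).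
   2. Branching property: given r_h(tau) = t with k = G_h(t) >= 1, the k subtrees
      above generation h are independent GW trees; keeping only the event that
      exactly one of them reaches generation n - h with alpha_n vertices gives
        P(r_h(tau) = t, G_n(tau) = alpha_n)
          >= P(r_h(tau) = t) k P(G_{n-h}(tau) = alpha_n) P(G_{n-h}(tau) = 0)^(k-1).
   3. Criticality forces extinction: P(G_m(tau) = 0) -> 1.  With the ratio
      hypothesis, 1-3 give liminf P(r_h(tau) = t | G_n(tau) = alpha_n) >= P(r_h(tau^star) = t).
   4. Criticality also gives E[G_h(tau)] = 1, so the Kesten probabilities of a large
      finite family of trees have total mass close to 1, while the conditional
      probabilities of distinct trees have total mass at most 1.  A lower bound plus
      a mass bound forces convergence, which is the theorem. *)

Definition ind (b : bool) : R := if b then 1 else 0.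

Lemma ind_ge0 b : 0 <= ind b.
Proof. destruct b; simpl; lra. Qed.

Lemma ind_le1 b : ind b <= 1.
Proof. destruct b; simpl; lra. Qed.

Lemma ind_and a b : ind (a && b) = ind a * ind b.
Proof. destruct a, b; simpl; lra. Qed.

Lemma Rsum_app l1 l2 : Rsum (l1 ++ l2) = Rsum l1 + Rsum l2.
Proof. induction l1; simpl; [lra | rewrite IHl1; lra]. Qed.

Lemma Rprod_app l1 l2 : Rprod (l1 ++ l2) = Rprod l1 * Rprod l2.
Proof. induction l1; simpl; [lra | rewrite IHl1; lra]. Qed.

Section ListSums.
Context {A : Type}.
Implicit Types (f g : A -> R) (l : list A).

Lemma Rsum_map_plus f g l :
  Rsum (map (fun x => f x + g x) l) = Rsum (map f l) + Rsum (map g l).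
Proof. induction l; simpl; [lra | rewrite IHl; lra]. Qed.

Lemma Rsum_map_scal (c : R) f l : Rsum (map (fun x => c * f x) l) = c * Rsum (map f l).
Proof. induction l; simpl; [lra | rewrite IHl; lra]. Qed.

Lemma Rsum_map_scal_r (c : R) f l : Rsum (map (fun x => f x * c) l) = Rsum (map f l) * c.
Proof. induction l; simpl; [lra | rewrite IHl; lra]. Qed.

Lemma Rsum_map_ext f g l :
  (forall x, In x l -> f x = g x) -> Rsum (map f l) = Rsum (map g l).
Proof. induction l; simpl; intros H; [lra |]. rewrite H, IHl; auto. Qed.

Lemma Rsum_map_le f g l :
  (forall x, In x l -> f x <= g x) -> Rsum (map f l) <= Rsum (map g l).
Proof. induction l; simpl; intros H; [lra |]. apply Rplus_le_compat; auto. Qed.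

Lemma Rsum_map_ge0 f l : (forall x, In x l -> 0 <= f x) -> 0 <= Rsum (map f l).
Proof. induction l; simpl; intros H; [lra |]. apply Rplus_le_le_0_compat; auto. Qed.

Lemma Rsum_map_0 f l : (forall x, In x l -> f x = 0) -> Rsum (map f l) = 0.
Proof. induction l; simpl; intros H; [lra |]. rewrite H, IHl; auto; lra. Qed.

Lemma Rprod_map_ge0 f l : (forall x, In x l -> 0 <= f x) -> 0 <= Rprod (map f l).
Proof. induction l; simpl; intros H; [lra |]. apply Rmult_le_pos; auto. Qed.

Lemma Rsum_ge_term f l x :
  In x l -> (forall y, In y l -> 0 <= f y) -> f x <= Rsum (map f l).
Proof.
  induction l as [|a l IH]; simpl; intros Hin H; [contradiction |].
  destruct Hin as [<- | Hin].
  - assert (0 <= Rsum (map f l)) by (apply Rsum_map_ge0; auto). lra.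
  - assert (0 <= f a) by auto. specialize (IH Hin (fun y Hy => H y (or_intror Hy))). lra.
Qed.

Lemma Rsum_const_len (c : R) l : Rsum (map (fun _ => c) l) = INR (length l) * c.
Proof. induction l; simpl length; [simpl; lra |]. rewrite S_INR. simpl. rewrite IHl. lra. Qed.

Lemma Rsum_filter f (P : A -> bool) l :
  Rsum (map f (filter P l)) = Rsum (map (fun x => ind (P x) * f x) l).
Proof. induction l; simpl; auto. destruct (P a); simpl; rewrite IHl; lra. Qed.

Lemma Rsum_flat_map {B} (F : B -> R) (g : A -> list B) l :
  Rsum (map F (flat_map g l)) = Rsum (map (fun x => Rsum (map F (g x))) l).
Proof. induction l; simpl; auto. rewrite map_app, Rsum_app, IHl; auto. Qed.

Lemma Rprod_nonzero f l : Rprod (map f l) <> 0 -> forall x, In x l -> f x <> 0.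
Proof.
  induction l; simpl; intros H x Hx; [contradiction |].
  destruct Hx as [<- | Hx].
  - intros E. apply H. rewrite E. ring.
  - apply IHl; auto. intros E. apply H. rewrite E. ring.
Qed.

End ListSums.

Lemma Rsum_swap {A B : Type} (F : A -> B -> R) (l : list A) (l' : list B) :
  Rsum (map (fun x => Rsum (map (fun y => F x y) l')) l) =
  Rsum (map (fun y => Rsum (map (fun x => F x y) l)) l').
Proof.
  induction l; simpl.
  - symmetry; apply Rsum_map_0; auto.
  - rewrite IHl, <- Rsum_map_plus. auto.
Qed.


Lemma INR_list_sum {A} (g : A -> nat) l :
  INR (list_sum (map g l)) = Rsum (map (fun x => INR (g x)) l).
Proof. induction l; simpl; auto. rewrite plus_INR, IHl. auto. Qed.

Lemma Rsum_seq_sum_f (f : nat -> R) K : Rsum (map f (seq 0 (S K))) = sum_f_R0 f K.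
Proof.
  induction K; [simpl; lra |].
  rewrite seq_S, map_app, Rsum_app, IHK. simpl. lra.
Qed.

Lemma Rsum_seq_mono (f : nat -> R) K M : (K <= M)%nat -> (forall k, 0 <= f k) ->
  Rsum (map f (seq 0 (S K))) <= Rsum (map f (seq 0 (S M))).
Proof.
  intros HKM Hf. replace (S M) with (S K + (M - K))%nat by lia.
  rewrite seq_app, map_app, Rsum_app.
  assert (0 <= Rsum (map f (seq (0 + S K) (M - K)))) by (apply Rsum_map_ge0; auto). lra.
Qed.

Lemma Rsum_seq_single (f : nat -> R) N i : (i < N)%nat -> (forall j, j <> i -> f j = 0) ->
  Rsum (map f (seq 0 N)) = f i.
Proof.
  intros Hi H. replace N with (i + 1 + (N - i - 1))%nat by lia.
  rewrite !seq_app, !map_app, !Rsum_app.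
  rewrite (Rsum_map_0 f (seq 0 i)), (Rsum_map_0 f (seq (0 + i + 1) _)); [simpl; lra | |];
    intros x Hx; apply in_seq in Hx; apply H; lia.
Qed.

Lemma Rsum_seq_ind_le1 N c : Rsum (map (fun k => ind (Nat.eqb k c)) (seq 0 N)) <= 1.
Proof.
  destruct (lt_dec c N).
  - rewrite (Rsum_seq_single _ N c); auto.
    + apply ind_le1.
    + intros j Hj. apply Nat.eqb_neq in Hj. rewrite Hj. reflexivity.
  - rewrite Rsum_map_0; [lra |]. intros x Hx. apply in_seq in Hx.
    destruct (Nat.eqb_spec x c); [lia | reflexivity].
Qed.

Lemma partial_sum_le1 (f : nat -> R) : (forall n, 0 <= f n) -> infinite_sum f 1 ->
  forall K, Rsum (map f (seq 0 (S K))) <= 1.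
Proof.
  intros Hf Hs K. rewrite Rsum_seq_sum_f. apply (growing_ineq (sum_f_R0 f)); auto.
  intros n. simpl. specialize (Hf (S n)). lra.
Qed.

Lemma partial_sum_ev (f : nat -> R) : infinite_sum f 1 -> forall e, 0 < e ->
  exists K, forall K', (K <= K')%nat -> 1 - e <= Rsum (map f (seq 0 (S K'))).
Proof.
  intros H e He. destruct (H e He) as [K HK]. exists K. intros K' HK'.
  specialize (HK K' HK'). rewrite Rsum_seq_sum_f. unfold R_dist in HK.
  apply Rabs_def2 in HK. lra.
Qed.

Lemma In_lists_of {A} k (L : list A) l :
  In l (lists_of k L) <-> length l = k /\ forall x, In x l -> In x L.
Proof.
  revert l; induction k; intros l; simpl.
  - split.
    + intros [<- | []]. split; auto. intros x [].
    + intros [H _]. destruct l; [auto | discriminate].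
  - rewrite in_flat_map. split.
    + intros [x [Hx Hl]]. apply in_map_iff in Hl. destruct Hl as [l' [<- Hl']].
      apply IHk in Hl'. destruct Hl' as [Hlen Hin]. simpl. split; [lia |].
      intros y [<- | Hy]; auto.
    + intros [Hlen Hin]. destruct l as [|x l']; [discriminate |].
      exists x. split; [apply Hin; simpl; auto |].
      apply in_map, IHk. split; [simpl in Hlen; lia |]. intros y Hy; apply Hin; simpl; auto.
Qed.

Lemma sum_lists_S {A} (G : list A -> R) k L :
  Rsum (map G (lists_of (S k) L)) =
  Rsum (map (fun x => Rsum (map (fun l => G (x :: l)) (lists_of k L))) L).
Proof. simpl. rewrite Rsum_flat_map. apply Rsum_map_ext. intros. rewrite map_map. auto. Qed.

Lemma sum_lists_len {A} k (L : list A) (G : nat -> list A -> R) :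
  Rsum (map (fun l => G (length l) l) (lists_of k L)) = Rsum (map (fun l => G k l) (lists_of k L)).
Proof. apply Rsum_map_ext. intros l Hl. apply In_lists_of in Hl. destruct Hl as [-> _]. auto. Qed.

Lemma sum_lists_app {A} a b (L : list A) G :
  Rsum (map G (lists_of (a + b) L)) =
  Rsum (map (fun l1 => Rsum (map (fun l2 => G (l1 ++ l2)) (lists_of b L))) (lists_of a L)).
Proof.
  revert G; induction a; intros G.
  - simpl. rewrite Rplus_0_r. reflexivity.
  - simpl plus. rewrite !sum_lists_S. apply Rsum_map_ext. intros x _.
    rewrite (IHa (fun l => G (x :: l))). auto.
Qed.

Lemma sum_lists_prod {A} (f : A -> R) k L :
  Rsum (map (fun l => Rprod (map f l)) (lists_of k L)) = (Rsum (map f L)) ^ k.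
Proof.
  induction k; [simpl; lra |].
  rewrite sum_lists_S. simpl pow.
  rewrite (Rsum_map_ext _ (fun x => f x * (Rsum (map f L)) ^ k)).
  - rewrite Rmult_comm, <- Rsum_map_scal. apply Rsum_map_ext. intros; lra.
  - intros x _. simpl. rewrite Rsum_map_scal, IHk. auto.
Qed.

(* The derivative of the previous identity: summing (sum_l g) * prod_l f over k-tuples. *)
Lemma sum_lists_lin {A} (g f : A -> R) k L :
  Rsum (map (fun l => Rsum (map g l) * Rprod (map f l)) (lists_of k L)) =
  INR k * Rsum (map (fun x => g x * f x) L) * (Rsum (map f L)) ^ (pred k).
Proof.
  induction k; [simpl; lra |].
  rewrite sum_lists_S.
  rewrite (Rsum_map_ext _ (fun x => g x * f x * (Rsum (map f L)) ^ k +
      f x * (INR k * Rsum (map (fun x => g x * f x) L) * (Rsum (map f L)) ^ (pred k)))).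
  - rewrite Rsum_map_plus, !Rsum_map_scal_r.
    destruct k; [simpl; lra |].
    simpl pred. simpl pow. rewrite (S_INR (S k)). set (P := Rsum (map f L) ^ k). ring.
  - intros x _.
    rewrite (Rsum_map_ext _ (fun l => (g x * f x) * Rprod (map f l) +
                                       f x * (Rsum (map g l) * Rprod (map f l))))
      by (intros; simpl; ring).
    rewrite Rsum_map_plus, !Rsum_map_scal, sum_lists_prod, IHk. ring.
Qed.

(* Sublists (order-preserving), used to compare truncation levels M and M+1. *)
Inductive sublist {A : Type} : list A -> list A -> Prop :=
| sublist_nil : sublist [] []
| sublist_skip x l1 l2 : sublist l1 l2 -> sublist l1 (x :: l2)
| sublist_keep x l1 l2 : sublist l1 l2 -> sublist (x :: l1) (x :: l2).

Lemma sublist_refl {A} (l : list A) : sublist l l.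
Proof. induction l; [apply sublist_nil | apply sublist_keep; auto]. Qed.

Lemma sublist_nil_l {A} (l : list A) : sublist [] l.
Proof. induction l; [apply sublist_nil | apply sublist_skip; auto]. Qed.

Lemma sublist_app {A} (a b c d : list A) : sublist a b -> sublist c d -> sublist (a ++ c) (b ++ d).
Proof.
  intros H1 H2. induction H1; simpl; auto; [apply sublist_skip | apply sublist_keep]; auto.
Qed.

Lemma sublist_map {A B} (f : A -> B) l1 l2 : sublist l1 l2 -> sublist (map f l1) (map f l2).
Proof.
  intros H; induction H; simpl; [apply sublist_nil | apply sublist_skip | apply sublist_keep]; auto.
Qed.

Lemma sublist_flat_map {A B} (f g : A -> list B) l1 l2 :
  sublist l1 l2 -> (forall x, sublist (f x) (g x)) -> sublist (flat_map f l1) (flat_map g l2).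
Proof.
  intros H Hfg. induction H; simpl.
  - constructor.
  - rewrite <- (app_nil_l (flat_map f l1)). apply sublist_app; auto. apply sublist_nil_l.
  - apply sublist_app; auto.
Qed.

Lemma sublist_lists_of {A} k (L1 L2 : list A) :
  sublist L1 L2 -> sublist (lists_of k L1) (lists_of k L2).
Proof.
  intros H. induction k; simpl; [apply sublist_refl |].
  apply sublist_flat_map; auto. intros x. apply sublist_map. auto.
Qed.

Lemma sum_sublist {A} (f : A -> R) l1 l2 : sublist l1 l2 -> (forall x, 0 <= f x) ->
  Rsum (map f l1) <= Rsum (map f l2).
Proof. intros H Hf. induction H; simpl; try lra. specialize (Hf x). lra. Qed.

Fixpoint tree_ind' (P : tree -> Prop) (H : forall l, Forall P l -> P (Node l)) (t : tree) : P t :=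
  match t with
  | Node l => H l ((fix F (l : list tree) : Forall P l :=
                      match l with
                      | [] => Forall_nil _
                      | x :: l' => Forall_cons _ (tree_ind' P H x) (F l')
                      end) l)
  end.

Lemma tree_eqb_cons x a y b :
  tree_eqb (Node (x :: a)) (Node (y :: b)) = tree_eqb x y && tree_eqb (Node a) (Node b).
Proof. reflexivity. Qed.

Lemma tree_eqb_sound : forall s t, tree_eqb s t = true -> s = t.
Proof.
  intros s. induction s as [ls IH] using tree_ind'.
  induction IH as [|x ls Hx Hls IHls]; intros [lt] H.
  - destruct lt; [auto | discriminate].
  - destruct lt as [|y lt]; [discriminate |]. rewrite tree_eqb_cons in H.
    apply andb_true_iff in H. destruct H as [H1 H2].
    apply Hx in H1. apply IHls in H2. injection H2 as H2. subst. auto.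
Qed.

Lemma sum_trees_bd_S (F : tree -> R) n M :
  Rsum (map F (trees_bd (S n) M)) =
  Rsum (map (fun k => Rsum (map (fun ls => F (Node ls)) (lists_of k (trees_bd n M))))
            (seq 0 (S M))).
Proof.
  change (trees_bd (S n) M) with
    (flat_map (fun k => map Node (lists_of k (trees_bd n M))) (seq 0 (S M))).
  rewrite Rsum_flat_map. apply Rsum_map_ext. intros. rewrite map_map. auto.
Qed.

Lemma In_trees_bd_0 t M : In t (trees_bd 0 M) <-> t = leaf.
Proof. simpl. split; [intros [<- | []]; auto | intros ->; auto]. Qed.

Lemma In_trees_bd_S t n M : In t (trees_bd (S n) M) <->
  exists l, t = Node l /\ (length l <= M)%nat /\ forall x, In x l -> In x (trees_bd n M).
Proof.
  change (trees_bd (S n) M) with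
    (flat_map (fun k => map Node (lists_of k (trees_bd n M))) (seq 0 (S M))).
  rewrite in_flat_map. split.
  - intros [k [Hk Ht]]. apply in_seq in Hk. apply in_map_iff in Ht. destruct Ht as [l [<- Hl]].
    apply In_lists_of in Hl. destruct Hl as [Hlen Hin]. exists l. split; auto. split; [lia | auto].
  - intros [l [-> [Hlen Hin]]]. exists (length l). split; [apply in_seq; lia |].
    apply in_map. apply In_lists_of. auto.
Qed.

Lemma In_trees_bd_mono : forall n t M M',
  In t (trees_bd n M) -> (M <= M')%nat -> In t (trees_bd n M').
Proof.
  induction n; intros t M M' H HM.
  - apply In_trees_bd_0 in H. apply In_trees_bd_0. auto.
  - apply In_trees_bd_S in H. destruct H as [l [-> [Hl Hin]]].
    apply In_trees_bd_S. exists l. repeat split; [lia |]. intros x Hx. eauto.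
Qed.

Lemma trees_bd_uniform h l : (forall x, In x l -> exists M, In x (trees_bd h M)) ->
  exists M, forall x, In x l -> In x (trees_bd h M).
Proof.
  induction l as [|a l IH]; intros H; [exists 0%nat; intros _ [] |].
  destruct (H a) as [M1 H1]; [simpl; auto |].
  destruct IH as [M2 H2]; [intros; apply H; simpl; auto |].
  exists (max M1 M2). intros x [<- | Hx]; eapply In_trees_bd_mono; eauto; lia.
Qed.

Lemma sublist_trees_bd n M : sublist (trees_bd n M) (trees_bd n (S M)).
Proof.
  induction n; [apply sublist_refl |].
  change (sublist (flat_map (fun k => map Node (lists_of k (trees_bd n M))) (seq 0 (S M)))
            (flat_map (fun k => map Node (lists_of k (trees_bd n (S M)))) (seq 0 (S (S M))))).
  rewrite (seq_S (S M)), flat_map_app. rewrite <- (app_nil_r (flat_map _ (seq 0 (S M)))).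
  apply sublist_app; [| apply sublist_nil_l].
  apply sublist_flat_map; [apply sublist_refl |]. intros k.
  apply sublist_map, sublist_lists_of. auto.
Qed.

Lemma restr_in : forall h n s M, In s (trees_bd n M) -> In (restr h s) (trees_bd h M).
Proof.
  induction h; intros n s M H; [simpl; auto |].
  destruct n.
  - apply In_trees_bd_0 in H. subst. simpl. apply In_trees_bd_S.
    exists []. simpl. repeat split; [lia |]. intros _ [].
  - apply In_trees_bd_S in H. destruct H as [l [-> [Hl Hin]]]. simpl. apply In_trees_bd_S.
    exists (map (restr h) l). rewrite length_map. repeat split; auto.
    intros x Hx. apply in_map_iff in Hx. destruct Hx as [y [<- Hy]]. eauto.
Qed.

Lemma count_lists L lu : (forall y, Rsum (map (fun x => ind (tree_eqb y x)) L) <= 1) ->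
  forall k, Rsum (map (fun ls => ind (tree_eqb (Node lu) (Node ls))) (lists_of k L))
            <= ind (Nat.eqb k (length lu)).
Proof.
  intros HL. induction lu as [|y lu IH]; intros k; destruct k; try (simpl; lra).
  - rewrite sum_lists_S. simpl (ind (_ =? _)). rewrite Rsum_map_0; [lra |]. intros x _.
    apply Rsum_map_0. intros. reflexivity.
  - rewrite sum_lists_S. simpl length. simpl (Nat.eqb (S k) (S _)).
    eapply Rle_trans.
    + apply Rsum_map_le with (g := fun x => ind (tree_eqb y x) * ind (Nat.eqb k (length lu))).
      intros x _.
      rewrite (Rsum_map_ext _ (fun l => ind (tree_eqb y x) * ind (tree_eqb (Node lu) (Node l))))
        by (intros; rewrite tree_eqb_cons, ind_and; auto).
      rewrite Rsum_map_scal. apply Rmult_le_compat_l; [apply ind_ge0 | apply IH].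
    + rewrite Rsum_map_scal_r. specialize (HL y).
      pose proof (ind_ge0 (Nat.eqb k (length lu))). nra.
Qed.

Lemma trees_bd_count_le1 h M : forall u, Rsum (map (fun t => ind (tree_eqb u t)) (trees_bd h M)) <= 1.
Proof.
  induction h; intros u.
  - simpl. pose proof (ind_le1 (tree_eqb u leaf)). lra.
  - rewrite sum_trees_bd_S. destruct u as [lu].
    eapply Rle_trans; [| apply (Rsum_seq_ind_le1 (S M) (length lu))].
    apply Rsum_map_le. intros k _. apply count_lists. auto.
Qed.

Lemma cv_const c : Un_cv (fun _ => c) c.
Proof. intros e He. exists 0%nat. intros. unfold R_dist. rewrite Rminus_diag, Rabs_R0. auto. Qed.

Lemma cv_ev_eq u v l : (exists N, forall n, (N <= n)%nat -> u n = v n) -> Un_cv v l -> Un_cv u l.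
Proof.
  intros [N HN] Hv e He. destruct (Hv e He) as [N1 H1]. exists (max N N1). intros n Hn.
  rewrite HN by lia. apply H1. lia.
Qed.

Lemma cv_le_ev u v l l' : Un_cv u l -> Un_cv v l' ->
  (exists N, forall n, (N <= n)%nat -> u n <= v n) -> l <= l'.
Proof.
  intros Hu Hv [N HN]. destruct (Rle_dec l l') as [| Hlt]; auto. exfalso.
  assert (He : 0 < (l - l') / 2) by lra.
  destruct (Hu _ He) as [N1 H1]. destruct (Hv _ He) as [N2 H2].
  set (n := max N (max N1 N2)).
  specialize (H1 n ltac:(unfold n; lia)). specialize (H2 n ltac:(unfold n; lia)).
  specialize (HN n ltac:(unfold n; lia)).
  unfold R_dist in *. apply Rabs_def2 in H1. apply Rabs_def2 in H2. lra.
Qed.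

Lemma cv_Rsum {A} (f : nat -> A -> R) g l :
  (forall x, In x l -> Un_cv (fun M => f M x) (g x)) ->
  Un_cv (fun M => Rsum (map (f M) l)) (Rsum (map g l)).
Proof.
  induction l; intros H; simpl; [apply cv_const |].
  apply CV_plus; [apply H; simpl; auto |]. apply IHl. intros; apply H; simpl; auto.
Qed.

Lemma cv_pow u l k : Un_cv u l -> Un_cv (fun n => u n ^ k) (l ^ k).
Proof. intros H. induction k; simpl; [apply cv_const | apply CV_mult; auto]. Qed.

Lemma cv_shift u l h : Un_cv u l -> Un_cv (fun n => u (n - h)%nat) l.
Proof. intros H e He. destruct (H e He) as [N HN]. exists (N + h)%nat. intros n Hn. apply HN. lia. Qed.

Lemma eventually_forall_in {A} (P : nat -> A -> Prop) (L : list A) :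
  (forall x, In x L -> exists N, forall n, (N <= n)%nat -> P n x) ->
  exists N, forall n, (N <= n)%nat -> forall x, In x L -> P n x.
Proof.
  induction L as [|a L IH]; intros H; [exists 0%nat; intros _ _ _ [] |].
  destruct IH as [N1 H1]; [intros; apply H; simpl; auto |].
  destruct (H a) as [N2 H2]; [simpl; auto |].
  exists (max N1 N2). intros n Hn x [<- | Hx]; [apply H2 | apply H1]; auto; lia.
Qed.

Definition ev_ge (u : nat -> R) (c : R) :=
  forall e, 0 < e -> exists N, forall M, (N <= M)%nat -> c - e <= u M.

Lemma ev_ge_small u c :
  (forall e, 0 < e <= 1 -> exists N, forall M, (N <= M)%nat -> c - e <= u M) -> ev_ge u c.
Proof.
  intros H e He. destruct (Rle_dec e 1); [apply H; lra |].
  destruct (H 1) as [N HN]; [lra |]. exists N. intros M HM. specialize (HN M HM). lra.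
Qed.

Lemma pow_le1 x k : 0 <= x <= 1 -> x ^ k <= 1.
Proof. intros H. induction k; simpl; [lra |]. pose proof (pow_le x k). nra. Qed.

Lemma bernoulli y k : 0 <= y -> 1 + INR k * (y - 1) <= y ^ k.
Proof.
  intros Hy. induction k; [simpl; lra |].
  rewrite S_INR. simpl pow. pose proof (pos_INR k).
  assert (y * (1 + INR k * (y - 1)) <= y * y ^ k) by (apply Rmult_le_compat_l; lra).
  assert (0 <= INR k * ((y - 1) * (y - 1))) by (apply Rmult_le_pos; [lra | apply Rle_0_sqr]).
  nra.
Qed.

Lemma bernoulli_quadratic x k : 0 <= x <= 1 -> (2 <= k)%nat ->
  1 + INR k * (x - 1) + (1 - x) * (1 - x) <= x ^ k.
Proof.
  intros Hx Hk. induction Hk; [simpl; lra |].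
  rewrite S_INR. simpl pow. pose proof (pow_le1 x m Hx).
  assert (x * (1 + INR m * (x - 1) + (1 - x) * (1 - x)) <= x * x ^ m)
    by (apply Rmult_le_compat_l; lra).
  assert (2 <= INR m) by (apply (le_INR 2); auto).
  assert (0 <= ((1 - x) * (1 - x)) * (INR m - (1 - x))) by (apply Rmult_le_pos; nra).
  nra.
Qed.

Section GaltonWatson.

Variable p : nat -> R.
Hypothesis p_nonneg : forall n, 0 <= p n.
Hypothesis p_prob : infinite_sum p 1.

Lemma gw_prob_nonneg h t : 0 <= gw_prob p h t.
Proof.
  revert t; induction h; intros [l].
  - destruct l; simpl; lra.
  - simpl. apply Rmult_le_pos; auto. apply Rprod_map_ge0. auto.
Qed.

Definition forest_prob n (l : list tree) : R := Rprod (map (gw_prob p n) l).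
Definition forest_gen n (l : list tree) : nat := list_sum (map (gen n) l).

Lemma forest_prob_nonneg h l : 0 <= forest_prob h l.
Proof. apply Rprod_map_ge0. intros; apply gw_prob_nonneg. Qed.

Lemma forest_prob_cons n x l : forest_prob n (x :: l) = gw_prob p n x * forest_prob n l.
Proof. reflexivity. Qed.

Lemma forest_prob_app n l1 l2 : forest_prob n (l1 ++ l2) = forest_prob n l1 * forest_prob n l2.
Proof. unfold forest_prob. rewrite map_app, Rprod_app. auto. Qed.

Definition gw_mass n M := Rsum (map (gw_prob p n) (trees_bd n M)).

Lemma gw_mass_S n M : gw_mass (S n) M = Rsum (map (fun k => p k * (gw_mass n M) ^ k) (seq 0 (S M))).
Proof.
  unfold gw_mass at 1. rewrite sum_trees_bd_S. apply Rsum_map_ext. intros k _.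
  simpl gw_prob. rewrite (sum_lists_len k _ (fun m l => p m * Rprod (map (gw_prob p n) l))).
  rewrite Rsum_map_scal, sum_lists_prod. auto.
Qed.

Lemma gw_mass_bounds n M : 0 <= gw_mass n M <= 1.
Proof.
  induction n; [unfold gw_mass; simpl; lra |].
  rewrite gw_mass_S. split.
  - apply Rsum_map_ge0. intros. apply Rmult_le_pos; auto. apply pow_le. lra.
  - apply Rle_trans with (Rsum (map p (seq 0 (S M)))); [| apply partial_sum_le1; auto].
    apply Rsum_map_le. intros k _. rewrite <- (Rmult_1_r (p k)) at 2.
    apply Rmult_le_compat_l; auto. apply pow_le1; lra.
Qed.

Lemma gw_event_trunc_le n M (A : tree -> bool) :
  Rsum (map (gw_prob p n) (filter A (trees_bd n M))) <= 1.
Proof.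
  rewrite Rsum_filter. apply Rle_trans with (gw_mass n M); [| apply gw_mass_bounds].
  apply Rsum_map_le. intros s _. pose proof (gw_prob_nonneg n s).
  pose proof (ind_le1 (A s)). pose proof (ind_ge0 (A s)). nra.
Qed.

(* [gw_event] is indeed the limit of its degree-truncated approximations:
   these increase in M and are bounded by 1. *)
Lemma gw_event_cv n A :
  Un_cv (fun M => Rsum (map (gw_prob p n) (filter A (trees_bd n M)))) (gw_event p n A).
Proof.
  assert (Hg : Un_growing (fun M => Rsum (map (gw_prob p n) (filter A (trees_bd n M))))).
  { intros M. rewrite !Rsum_filter. apply sum_sublist; [apply sublist_trees_bd |].
    intros. apply Rmult_le_pos; [apply ind_ge0 | apply gw_prob_nonneg]. }
  assert (Hb : has_ub (fun M => Rsum (map (gw_prob p n) (filter A (trees_bd n M))))).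
  { exists 1. intros x [M ->]. apply gw_event_trunc_le. }
  destruct (growing_cv _ Hg Hb) as [l Hl].
  unfold gw_event. apply epsilon_spec. exists l. auto.
Qed.

Lemma gw_event_bounds n A : 0 <= gw_event p n A <= 1.
Proof.
  pose proof (gw_event_cv n A) as H. split.
  - eapply Rle_cv_lim; [| apply cv_const | exact H].
    intros M. apply Rsum_map_ge0. intros; apply gw_prob_nonneg.
  - eapply Rle_cv_lim; [| exact H | apply cv_const]. intros M. apply gw_event_trunc_le.
Qed.

Definition gen_mass m a (L : list tree) : R :=
  Rsum (map (fun x => ind (Nat.eqb (gen m x) a) * gw_prob p m x) L).

Lemma gen_mass_nonneg m a L : 0 <= gen_mass m a L.
Proof. apply Rsum_map_ge0. intros. apply Rmult_le_pos; [apply ind_ge0 | apply gw_prob_nonneg]. Qed.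

Lemma P_gen_cv m a : Un_cv (fun M => gen_mass m a (trees_bd m M)) (P_gen p m a).
Proof.
  eapply cv_ev_eq; [| apply (gw_event_cv m (fun s => Nat.eqb (gen m s) a))].
  exists 0%nat. intros. rewrite Rsum_filter. auto.
Qed.

Lemma P_joint_cv n a h t : (h <= n)%nat ->
  Un_cv (fun M => Rsum (map (fun s => ind (tree_eqb (restr h s) t) * ind (Nat.eqb (gen n s) a)
                                      * gw_prob p n s) (trees_bd n M)))
        (P_joint p n a h t).
Proof.
  intros Hhn. unfold P_joint. rewrite Nat.max_l by auto.
  eapply cv_ev_eq; [| apply gw_event_cv].
  exists 0%nat. intros. rewrite Rsum_filter. apply Rsum_map_ext. intros. rewrite ind_and. auto.
Qed.

Lemma gw_support h t : gw_prob p h t <> 0 -> exists M, In t (trees_bd h M).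
Proof.
  revert t; induction h; intros [l] H.
  - destruct l; simpl in H; [| lra]. exists 0%nat. simpl. auto.
  - simpl in H. assert (Hpr : Rprod (map (gw_prob p h) l) <> 0) by (intros E; apply H; rewrite E; ring).
    destruct (trees_bd_uniform h l) as [M HM].
    { intros x Hx. apply IHh. apply (Rprod_nonzero _ l Hpr x Hx). }
    exists (max M (length l)). apply In_trees_bd_S. exists l. repeat split; [lia |].
    intros x Hx. eapply In_trees_bd_mono; [apply HM; auto | lia].
Qed.

Lemma P_joint_zero n a h t : ~ (exists M, In t (trees_bd h M)) -> P_joint p n a h t = 0.
Proof.
  intros Hn. unfold P_joint. eapply UL_sequence; [apply gw_event_cv |].
  eapply cv_ev_eq; [| apply cv_const]. exists 0%nat. intros M _.
  rewrite Rsum_filter. apply Rsum_map_0. intros s Hs.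
  destruct (tree_eqb (restr h s) t) eqn:E; [| simpl; ring].
  exfalso. apply tree_eqb_sound in E. apply Hn. exists M. rewrite <- E. eapply restr_in; eauto.
Qed.

(* The events {r_h(tau) = t} for distinct trees t are disjoint, so summing
   P(r_h(tau) = t, G_n(tau) = a) over them gives at most P(G_n(tau) = a). *)
Lemma P_joint_mass_le n a h M : (h <= n)%nat ->
  Rsum (map (fun t => P_joint p n a h t) (trees_bd h M)) <= P_gen p n a.
Proof.
  intros Hhn. eapply cv_le_ev.
  - apply (cv_Rsum (fun M' t => Rsum (map (fun s => ind (tree_eqb (restr h s) t)
                   * ind (Nat.eqb (gen n s) a) * gw_prob p n s) (trees_bd n M')))).
    intros. apply P_joint_cv; auto.
  - apply P_gen_cv.
  - exists 0%nat. intros M' _. rewrite Rsum_swap. apply Rsum_map_le. intros s _.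
    rewrite (Rsum_map_ext _ (fun t => ind (tree_eqb (restr h s) t)
                                      * (ind (Nat.eqb (gen n s) a) * gw_prob p n s)))
      by (intros; ring).
    rewrite Rsum_map_scal_r. pose proof (trees_bd_count_le1 h M (restr h s)).
    assert (0 <= ind (Nat.eqb (gen n s) a) * gw_prob p n s)
      by (apply Rmult_le_pos; [apply ind_ge0 | apply gw_prob_nonneg]).
    nra.
Qed.

End GaltonWatson.

(** * Kesten's tree is the size-biased GW tree *)

Lemma map_nth_seq {A} (f : A -> R) l d :
  map (fun i => f (nth i l d)) (seq 0 (length l)) = map f l.
Proof.
  induction l; auto. simpl length. change (seq 0 (S (length l))) with (0%nat :: seq 1 (length l)).
  rewrite <- seq_shift. simpl. rewrite map_map. simpl. rewrite IHl. auto.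
Qed.

Lemma Rprod_remove (g : nat -> R) n i : (i < n)%nat ->
  Rprod (map g (seq 0 n)) = g i * Rprod (map g (filter (fun j => negb (Nat.eqb j i)) (seq 0 n))).
Proof.
  induction n; intros Hi; [lia |].
  rewrite seq_S, filter_app, !map_app, !Rprod_app. simpl filter.
  destruct (Nat.eqb_spec n i).
  - subst. simpl. rewrite forallb_filter_id; [lra |].
    apply forallb_forall. intros x Hx. apply in_seq in Hx.
    destruct (Nat.eqb_spec x i); [lia | auto].
  - simpl. rewrite IHn by lia. lra.
Qed.

(* For mu = 1, Kesten's tree satisfies P(r_h(tau^star) = t) = G_h(t) P(r_h(tau) = t):
   at each spine vertex with k children the factor 1/k of the uniform choice of the
   next spine vertex cancels the size bias p^star(k) = k p(k), and the sum over the
   spine position counts the G_h(t) vertices of generation h. *)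
Lemma kesten_size_biased p h t : kesten_prob p 1 h t = INR (gen h t) * gw_prob p h t.
Proof.
  revert t; induction h; intros [l].
  - destruct l; simpl; lra.
  - simpl kesten_prob. simpl gen. simpl gw_prob.
    rewrite (Rsum_map_ext _ (fun i => (p (length l) * Rprod (map (gw_prob p h) l))
                                      * INR (gen h (nth i l leaf)))).
    + rewrite Rsum_map_scal, (map_nth_seq (fun x => INR (gen h x))), INR_list_sum. lra.
    + intros i Hi. apply in_seq in Hi. rewrite IHh. unfold pstar.
      rewrite <- (map_nth_seq (gw_prob p h) l leaf).
      rewrite (Rprod_remove (fun j => gw_prob p h (nth j l leaf)) (length l) i) by lia.
      assert (INR (length l) <> 0) by (apply not_0_INR; lia).
      field. auto.
Qed.

Section TruncatedMean.

Variable p : nat -> R.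
Hypothesis p_nonneg : forall n, 0 <= p n.
Hypothesis p_prob : infinite_sum p 1.
Hypothesis critical : infinite_sum (fun n => INR n * p n) 1.

Let mean_terms_nonneg : forall n, 0 <= INR n * p n.
Proof. intros n. apply Rmult_le_pos; [apply pos_INR | auto]. Qed.

Definition gw_mean h M := Rsum (map (fun t => INR (gen h t) * gw_prob p h t) (trees_bd h M)).

(* Truncated version of E[G_{h+1}] = sum_k k p(k) E[G_h]. *)
Lemma gw_mean_S h M : gw_mean (S h) M =
  Rsum (map (fun k => p k * INR k * gw_mean h M * (gw_mass p h M) ^ (pred k)) (seq 0 (S M))).
Proof.
  unfold gw_mean at 1. rewrite sum_trees_bd_S. apply Rsum_map_ext. intros k _.
  simpl gen. simpl gw_prob.
  rewrite (sum_lists_len k _ (fun m ls => INR (list_sum (map (gen h) ls))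
                                          * (p m * Rprod (map (gw_prob p h) ls)))).
  rewrite (Rsum_map_ext _ (fun ls => p k * (Rsum (map (fun x => INR (gen h x)) ls)
                                            * Rprod (map (gw_prob p h) ls))))
    by (intros; rewrite INR_list_sum; ring).
  rewrite Rsum_map_scal, sum_lists_lin. unfold gw_mean, gw_mass. ring.
Qed.

(* The GW tree is finite at every height: P(degrees of r_h(tau) are <= M) -> 1. *)
Lemma gw_mass_ev h : ev_ge (gw_mass p h) 1.
Proof.
  induction h.
  - intros e He. exists 0%nat. intros. unfold gw_mass. simpl. lra.
  - intros e He. destruct (partial_sum_ev p p_prob (e/2)) as [K HK]; [lra |].
    destruct (IHh (e/2)) as [N HN]; [lra |].
    exists (max N K). intros M HM.
    rewrite gw_mass_S. specialize (HN M ltac:(lia)). pose proof (gw_mass_bounds p p_nonneg p_prob h M).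
    set (y := gw_mass p h M) in *.
    eapply Rle_trans; [| apply Rsum_seq_mono with (K := K); [lia |]].
    2:{ intros k. apply Rmult_le_pos; auto. apply pow_le. lra. }
    (* p(k) y^k >= p(k) - (1 - y) k p(k), by Bernoulli *)
    eapply Rle_trans; [| apply Rsum_map_le with (f := fun k => p k + (y - 1) * (INR k * p k))].
    2:{ intros k _. pose proof (bernoulli y k ltac:(lra)). pose proof (p_nonneg k). nra. }
    rewrite Rsum_map_plus, Rsum_map_scal.
    specialize (HK K (le_n _)).
    pose proof (partial_sum_le1 _ mean_terms_nonneg critical K).
    assert (0 <= Rsum (map (fun k => INR k * p k) (seq 0 (S K))))
      by (apply Rsum_map_ge0; auto).
    nra.
Qed.

Lemma mean_factor_lower d y z k K : 0 <= d <= 1 -> 1 - d <= y -> 1 - d <= z ->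
  (1 <= k <= K)%nat -> 1 - INR K * d <= z * y ^ pred k.
Proof.
  intros Hd Hy Hz Hk. destruct k as [|k]; [lia |]. simpl pred.
  pose proof (bernoulli (1 - d) (S k) ltac:(lra)) as HB. simpl pow in HB.
  assert ((1 - d) ^ k <= y ^ k) by (apply pow_incr; lra).
  assert (0 <= (1 - d) ^ k) by (apply pow_le; lra).
  assert (INR (S k) <= INR K) by (apply le_INR; lia).
  assert ((1 - d) * (1 - d) ^ k <= z * y ^ k) by (apply Rmult_le_compat; lra).
  nra.
Qed.

(* Criticality: E[G_h; degrees <= M] -> E[G_h] = 1 as M -> oo. *)
Lemma gw_mean_ev h : ev_ge (gw_mean h) 1.
Proof.
  induction h.
  - intros e He. exists 0%nat. intros. unfold gw_mean. simpl. lra.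
  - apply ev_ge_small. intros e He.
    destruct (partial_sum_ev _ critical (e/2)) as [K HK]; [lra |].
    specialize (HK K (le_n _)). pose proof (pos_INR K).
    set (d := e / (2 * (INR K + 1))).
    assert (Hd : 0 < d) by (unfold d; apply Rdiv_lt_0_compat; lra).
    assert (HdK : INR K * d <= e / 2 /\ d <= 1 / 2).
    { unfold d. split; apply (Rmult_le_reg_r (2 * (INR K + 1))); try lra;
        field_simplify; try lra; nra. }
    destruct (IHh d Hd) as [N1 HN1]. destruct (gw_mass_ev h d Hd) as [N2 HN2].
    exists (max (max N1 N2) K). intros M HM.
    specialize (HN1 M ltac:(lia)). specialize (HN2 M ltac:(lia)).
    pose proof (gw_mass_bounds p p_nonneg p_prob h M).
    rewrite gw_mean_S.
    set (y := gw_mass p h M) in *. set (z := gw_mean h M) in *.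
    eapply Rle_trans; [| apply Rsum_seq_mono with (K := K); [lia |]].
    2:{ intros k. apply Rmult_le_pos; [| apply pow_le; lra].
        apply Rmult_le_pos; [rewrite Rmult_comm; apply mean_terms_nonneg | lra]. }
    eapply Rle_trans;
      [| apply Rsum_map_le with (f := fun k => (1 - INR K * d) * (INR k * p k))].
    2:{ intros k Hk. apply in_seq in Hk. destruct k; [simpl; lra |].
        pose proof (mean_factor_lower d y z (S k) K ltac:(lra) ltac:(lra) ltac:(lra) ltac:(lia)).
        pose proof (mean_terms_nonneg (S k)). nra. }
    rewrite Rsum_map_scal.
    pose proof (partial_sum_le1 _ mean_terms_nonneg critical K). nra.
Qed.

End TruncatedMean.

(** * The branching property *)

Section Branching.

Variable p : nat -> R.

Fixpoint restr_match h (ss ts : list tree) : bool :=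
  match ss, ts with
  | [], [] => true
  | s :: ss', t :: ts' => tree_eqb (restr h s) t && restr_match h ss' ts'
  | _, _ => false
  end.

Definition children (t : tree) : list tree := match t with Node l => l end.

Lemma tree_eqb_restr_node h : forall ls c,
  tree_eqb (Node (map (restr h) ls)) (Node c) = restr_match h ls c.
Proof.
  induction ls; intros [|y c]; simpl map; auto.
  rewrite tree_eqb_cons, IHls. auto.
Qed.

Lemma restr_match_length h : forall ss ts, restr_match h ss ts = true -> length ss = length ts.
Proof.
  induction ss; intros [|t ts]; simpl; auto; try discriminate.
  intros H. apply andb_true_iff in H. destruct H. f_equal. auto.
Qed.

Lemma restr_match_app h : forall l1 c1 l2 c2, length l1 = length c1 ->
  restr_match h (l1 ++ l2) (c1 ++ c2) = restr_match h l1 c1 && restr_match h l2 c2.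
Proof.
  induction l1; intros [|y c1] l2 c2 H; simpl in *; try discriminate; auto.
  rewrite IHl1 by lia. apply andb_assoc.
Qed.

Lemma restr_match_leaves : forall ss ts, length ss = length ts ->
  (forall t, In t ts -> t = leaf) -> restr_match 0 ss ts = true.
Proof.
  induction ss; intros [|t ts] Hl H; simpl in *; try discriminate; auto.
  rewrite (H t), IHss; auto.
Qed.

Lemma forest_gen_S n ss : forest_gen (S n) ss = forest_gen n (concat (map children ss)).
Proof.
  unfold forest_gen. induction ss as [|[l] ss IH]; auto.
  simpl concat. rewrite map_app, list_sum_app, <- IH. reflexivity.
Qed.

Lemma forest_gen_0 ts : forest_gen 0 ts = length ts.
Proof. unfold forest_gen. induction ts as [|[] ts IH]; auto. simpl in *. rewrite IH. auto. Qed.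

Lemma forest_prob_S h ts : forest_prob p (S h) ts =
  Rprod (map (fun t => p (length (children t))) ts) * forest_prob p h (concat (map children ts)).
Proof.
  induction ts as [|[l] ts IH]; [unfold forest_prob; simpl; lra |].
  rewrite forest_prob_cons, IH. simpl concat. rewrite forest_prob_app. unfold forest_prob. simpl. ring.
Qed.

Lemma forest_prob_leaves ts : (forall t, In t ts -> t = leaf) -> forest_prob p 0 ts = 1.
Proof.
  induction ts as [|t ts IH]; intros H; [reflexivity |].
  rewrite forest_prob_cons, IH, (H t); [simpl; lra | simpl; auto |].
  intros; apply H; simpl; auto.
Qed.

Lemma sum_restr_node h n M c (G : list tree -> R) : (length c <= M)%nat ->
  Rsum (map (fun s => ind (tree_eqb (restr (S h) s) (Node c)) * gw_prob p (S n) s * G (children s))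
            (trees_bd (S n) M))
  = p (length c) * Rsum (map (fun ls => ind (restr_match h ls c) * forest_prob p n ls * G ls)
                             (lists_of (length c) (trees_bd n M))).
Proof.
  intros Hlen. rewrite sum_trees_bd_S, (Rsum_seq_single _ (S M) (length c)); [| lia |].
  - rewrite <- Rsum_map_scal. apply Rsum_map_ext. intros ls Hls.
    apply In_lists_of in Hls. destruct Hls as [Hls _].
    change (restr (S h) (Node ls)) with (Node (map (restr h) ls)).
    rewrite tree_eqb_restr_node.
    change (gw_prob p (S n) (Node ls)) with (p (length ls) * forest_prob p n ls).
    simpl children. rewrite Hls. ring.
  - intros j Hj. apply Rsum_map_0. intros ls Hls. apply In_lists_of in Hls. destruct Hls as [Hls _].
    simpl restr. rewrite tree_eqb_restr_node.
    destruct (restr_match h ls c) eqn:E; [apply restr_match_length in E; lia | simpl; lra].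
Qed.

Lemma branching_step h n M : forall ts (Psi : list tree -> R),
  (forall t, In t ts -> In t (trees_bd (S h) M)) ->
  Rsum (map (fun ss => ind (restr_match (S h) ss ts) * Psi (concat (map children ss))
                       * forest_prob p (S n) ss)
            (lists_of (length ts) (trees_bd (S n) M)))
  = Rprod (map (fun t => p (length (children t))) ts) *
    Rsum (map (fun cs => ind (restr_match h cs (concat (map children ts))) * Psi cs
                         * forest_prob p n cs)
            (lists_of (length (concat (map children ts))) (trees_bd n M))).
Proof.
  induction ts as [|[c] ts IH]; intros Psi Hin; [unfold forest_prob; simpl; lra |].
  assert (Hc : In (Node c) (trees_bd (S h) M)) by (apply Hin; simpl; auto).
  apply In_trees_bd_S in Hc. destruct Hc as [l [Hl [Hlen _]]]. injection Hl as <-.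
  set (Pts := Rprod (map (fun t => p (length (children t))) ts)).
  set (cts := concat (map children ts)).
  simpl length. rewrite sum_lists_S.
  rewrite (Rsum_map_ext _ (fun s => ind (tree_eqb (restr (S h) s) (Node c)) * gw_prob p (S n) s *
     (Pts * Rsum (map (fun cs => ind (restr_match h cs cts) * Psi (children s ++ cs)
                                 * forest_prob p n cs) (lists_of (length cts) (trees_bd n M)))))).
  2:{ intros s _. unfold Pts, cts.
      rewrite <- (IH (fun cs => Psi (children s ++ cs))) by (intros; apply Hin; simpl; auto).
      rewrite <- Rsum_map_scal. apply Rsum_map_ext. intros ss _.
      change (restr_match (S h) (s :: ss) (Node c :: ts))
        with (tree_eqb (restr (S h) s) (Node c) && restr_match (S h) ss ts).
      simpl concat. rewrite ind_and, forest_prob_cons. ring. }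
  etransitivity; [apply (sum_restr_node h n M c (fun ls => Pts * Rsum (map (fun cs =>
      ind (restr_match h cs cts) * Psi (ls ++ cs) * forest_prob p n cs)
      (lists_of (length cts) (trees_bd n M))))); auto |].
  change (concat (map children (Node c :: ts))) with (c ++ cts).
  change (Rprod (map (fun t => p (length (children t))) (Node c :: ts))) with (p (length c) * Pts).
  rewrite length_app, sum_lists_app, Rmult_assoc. f_equal. rewrite <- Rsum_map_scal.
  apply Rsum_map_ext. intros ls Hls. apply In_lists_of in Hls. destruct Hls as [Hls _].
  rewrite (Rsum_map_ext (fun l2 => ind (restr_match h (ls ++ l2) (c ++ cts)) * Psi (ls ++ l2)
                                   * forest_prob p n (ls ++ l2))
    (fun l2 => ind (restr_match h ls c) * forest_prob p n ls
               * (ind (restr_match h l2 cts) * Psi (ls ++ l2) * forest_prob p n l2)))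
    by (intros; rewrite restr_match_app, ind_and, forest_prob_app by auto; ring).
  rewrite Rsum_map_scal. unfold Pts, cts. ring.
Qed.

(* Branching property: conditionally on r_h of a forest being ts, the forest above
   generation h consists of G_h(ts) independent GW trees.  Here phi is any function
   of the size of generation n. *)
Lemma branching_property h : forall n M ts (phi : nat -> R), (h <= n)%nat ->
  (forall t, In t ts -> In t (trees_bd h M)) ->
  Rsum (map (fun ss => ind (restr_match h ss ts) * phi (forest_gen n ss) * forest_prob p n ss)
            (lists_of (length ts) (trees_bd n M)))
  = forest_prob p h ts *
    Rsum (map (fun us => phi (forest_gen (n - h) us) * forest_prob p (n - h) us)
              (lists_of (forest_gen h ts) (trees_bd (n - h) M))).
Proof.
  induction h; intros n M ts phi Hhn Hin.
  - assert (Hl : forall t, In t ts -> t = leaf) by (intros t Ht; apply (In_trees_bd_0 t M); auto).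
    rewrite forest_prob_leaves, forest_gen_0, Nat.sub_0_r, Rmult_1_l by auto.
    apply Rsum_map_ext. intros ss Hss. apply In_lists_of in Hss. destruct Hss as [Hss _].
    rewrite restr_match_leaves by auto. simpl. ring.
  - destruct n as [|n]; [lia |].
    assert (Hch : forall t, In t (concat (map children ts)) -> In t (trees_bd h M)).
    { intros t Ht. apply in_concat in Ht. destruct Ht as [l [Hl Ht]].
      apply in_map_iff in Hl. destruct Hl as [[c] [<- Hc]].
      apply Hin, In_trees_bd_S in Hc. destruct Hc as [l' [E [_ H']]]. injection E as <-. auto. }
    rewrite (Rsum_map_ext _ (fun ss => ind (restr_match (S h) ss ts)
               * (fun cs => phi (forest_gen n cs)) (concat (map children ss)) * forest_prob p (S n) ss))
      by (intros; rewrite forest_gen_S; auto).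
    etransitivity; [apply (branching_step h n M ts (fun cs => phi (forest_gen n cs))); auto |].
    rewrite IHh by (auto; lia).
    rewrite forest_prob_S, forest_gen_S. simpl minus. ring.
Qed.

End Branching.

(** * Forests with one survivor; extinction of critical GW trees *)

(* An increasing sequence in [0,1] with u_{m+1} >= u_m + c (1 - u_m)^2, c > 0,
   converges to 1: otherwise it would grow linearly. *)
Lemma cv_to_one_quadratic (u : nat -> R) (c : R) : 0 < c ->
  (forall m, 0 <= u m <= 1) -> (forall m, u m + c * ((1 - u m) * (1 - u m)) <= u (S m)) ->
  Un_cv u 1.
Proof.
  intros Hc Hb Hinc.
  assert (Hmono : forall m m', (m <= m')%nat -> u m <= u m').
  { intros m m' H. induction H; [lra |].
    specialize (Hinc m0). pose proof (Rle_0_sqr (1 - u m0)). unfold Rsqr in *. nra. }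
  intros e He.
  assert (Hex : exists m0, 1 - e < u m0).
  { apply NNPP. intros Hn.
    assert (Hall : forall m, u m <= 1 - e) by (intros m; apply Rnot_lt_le; intros H; apply Hn; eauto).
    set (e' := Rmin e 1).
    assert (He' : 0 < e' <= e) by (unfold e'; split; [apply Rmin_glb_lt; lra | apply Rmin_l]).
    assert (Hgrow : forall m, INR m * (c * (e' * e')) <= u m).
    { induction m; [simpl; rewrite Rmult_0_l; apply Hb |].
      specialize (Hinc m). specialize (Hall m). rewrite S_INR.
      assert (e' * e' <= (1 - u m) * (1 - u m)) by (apply Rmult_le_compat; lra).
      nra. }
    assert (Hpos : 0 < c * (e' * e')) by (apply Rmult_lt_0_compat; nra).
    destruct (INR_archimed (c * (e' * e')) 2 ltac:(lra)) as [N HN].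
    specialize (Hgrow N). specialize (Hb N). lra. }
  destruct Hex as [m0 Hm0]. exists m0. intros m Hm. unfold R_dist.
  pose proof (Hmono m0 m Hm). specialize (Hb m).
  rewrite Rabs_left1; lra.
Qed.

Section Extinction.

Variable p : nat -> R.
Hypothesis p_nonneg : forall n, 0 <= p n.
Hypothesis p_prob : infinite_sum p 1.
Hypothesis critical : infinite_sum (fun n => INR n * p n) 1.
Hypothesis p01 : p 0%nat + p 1%nat < 1.

Definition forest_gen_mass m a k (L : list tree) : R :=
  Rsum (map (fun us => ind (Nat.eqb (forest_gen m us) a) * forest_prob p m us) (lists_of k L)).

Lemma forest_extinct_pow m k L : forest_gen_mass m 0 k L = (gen_mass p m 0 L) ^ k.
Proof.
  unfold forest_gen_mass, gen_mass. rewrite <- sum_lists_prod. apply Rsum_map_ext.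
  intros us _. induction us as [|x us IH]; [unfold forest_prob; simpl; lra |].
  simpl. rewrite <- IH. unfold forest_prob, forest_gen. simpl.
  destruct (gen m x); simpl; [ring | lra].
Qed.

(* One step of "exactly one tree survives": either the first tree has size a and
   the others are extinct, or the first is extinct and the others have size a. *)
Lemma one_survivor_step m L a (Ha : (1 <= a)%nat) k :
  gen_mass p m a L * (gen_mass p m 0 L) ^ k + gen_mass p m 0 L * forest_gen_mass m a k L
  <= forest_gen_mass m a (S k) L.
Proof.
  unfold forest_gen_mass at 2. rewrite <- forest_extinct_pow. unfold forest_gen_mass, gen_mass.
  rewrite sum_lists_S, <- !Rsum_map_scal_r, <- Rsum_map_plus.
  apply Rsum_map_le. intros x _.
  rewrite <- !Rsum_map_scal, <- Rsum_map_plus.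
  apply Rsum_map_le. intros us _.
  change (forest_gen m (x :: us)) with (gen m x + forest_gen m us)%nat. rewrite forest_prob_cons.
  pose proof (gw_prob_nonneg p p_nonneg m x). pose proof (forest_prob_nonneg p p_nonneg m us).
  assert (Hind : ind (gen m x =? a) * ind (forest_gen m us =? 0)
                 + ind (gen m x =? 0) * ind (forest_gen m us =? a)
                 <= ind (gen m x + forest_gen m us =? a)).
  { destruct (Nat.eqb_spec (gen m x) a), (Nat.eqb_spec (forest_gen m us) 0),
      (Nat.eqb_spec (gen m x) 0), (Nat.eqb_spec (forest_gen m us) a),
      (Nat.eqb_spec (gen m x + forest_gen m us) a); simpl; lra || lia. }
  apply Rle_trans with ((ind (gen m x =? a) * ind (forest_gen m us =? 0)
                         + ind (gen m x =? 0) * ind (forest_gen m us =? a))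
                        * (gw_prob p m x * forest_prob p m us)); [right; ring |].
  apply Rle_trans with (ind (gen m x + forest_gen m us =? a) * (gw_prob p m x * forest_prob p m us));
    [apply Rmult_le_compat_r; nra | right; ring].
Qed.

(* P(forest of k+1 trees has a individuals at generation m)
   >= (k+1) P(G_m = a) P(G_m = 0)^k: exactly one tree survives. *)
Lemma one_survivor_lower m L a (Ha : (1 <= a)%nat) k :
  INR (S k) * gen_mass p m a L * (gen_mass p m 0 L) ^ k <= forest_gen_mass m a (S k) L.
Proof.
  pose proof (gen_mass_nonneg p p_nonneg m 0 L) as HZ.
  induction k.
  - pose proof (one_survivor_step m L a Ha 0) as H.
    assert (H0 : forest_gen_mass m a 0 L = 0)
      by (unfold forest_gen_mass; simpl; destruct a; [lia | simpl; lra]).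
    rewrite H0, Rmult_0_r, Rplus_0_r in H. simpl pow in *. simpl INR. lra.
  - pose proof (one_survivor_step m L a Ha (S k)) as H.
    rewrite S_INR. simpl pow in *.
    assert (gen_mass p m 0 L * (INR (S k) * gen_mass p m a L * gen_mass p m 0 L ^ k)
            <= gen_mass p m 0 L * forest_gen_mass m a (S k) L) by (apply Rmult_le_compat_l; auto).
    nra.
Qed.

Lemma gen_mass_0_S m M :
  gen_mass p (S m) 0 (trees_bd (S m) M) =
  Rsum (map (fun k => p k * (gen_mass p m 0 (trees_bd m M)) ^ k) (seq 0 (S M))).
Proof.
  unfold gen_mass at 1. rewrite sum_trees_bd_S. apply Rsum_map_ext. intros k _.
  rewrite <- forest_extinct_pow. unfold forest_gen_mass.
  rewrite (Rsum_map_ext _ (fun ls => p (length ls) * (ind (Nat.eqb (forest_gen m ls) 0)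
                                                      * forest_prob p m ls))).
  - rewrite (sum_lists_len k _ (fun j ls => p j * (ind (Nat.eqb (forest_gen m ls) 0)
                                                    * forest_prob p m ls))).
    apply Rsum_map_scal.
  - intros ls _. change (gen (S m) (Node ls)) with (forest_gen m ls).
    change (gw_prob p (S m) (Node ls)) with (p (length ls) * forest_prob p m ls). ring.
Qed.

Lemma extinction_rec m K :
  Rsum (map (fun k => p k * (P_gen p m 0) ^ k) (seq 0 (S K))) <= P_gen p (S m) 0.
Proof.
  apply (cv_le_ev (fun M => Rsum (map (fun k => p k * gen_mass p m 0 (trees_bd m M) ^ k) (seq 0 (S K))))
                  (fun M => gen_mass p (S m) 0 (trees_bd (S m) M))).
  - apply (cv_Rsum (fun M k => p k * gen_mass p m 0 (trees_bd m M) ^ k)). intros k _.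
    apply CV_mult; [apply cv_const | apply cv_pow, P_gen_cv; auto].
  - apply P_gen_cv; auto.
  - exists K. intros M HM. rewrite gen_mass_0_S. apply Rsum_seq_mono; auto.
    intros k. apply Rmult_le_pos; auto. apply pow_le, gen_mass_nonneg; auto.
Qed.

Lemma exists_branching_degree : exists k0, (2 <= k0)%nat /\ 0 < p k0.
Proof.
  apply NNPP. intros Hn.
  assert (Hz : forall k, (2 <= k)%nat -> p k = 0).
  { intros k Hk. destruct (Rle_lt_dec (p k) 0); [specialize (p_nonneg k); lra |].
    exfalso. apply Hn. eauto. }
  destruct (partial_sum_ev p p_prob ((1 - (p 0%nat + p 1%nat)) / 2)) as [K HK]; [lra |].
  specialize (HK (S K) ltac:(lia)).
  replace (S (S K)) with (2 + K)%nat in HK by lia. rewrite seq_app, map_app, Rsum_app in HK.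
  rewrite (Rsum_map_0 p (seq (0 + 2) K)) in HK; [simpl in HK; lra |].
  intros x Hx. apply in_seq in Hx. apply Hz. lia.
Qed.

Lemma extinction_increment k0 (Hk0 : (2 <= k0)%nat) m :
  P_gen p m 0 + p k0 * ((1 - P_gen p m 0) * (1 - P_gen p m 0)) <= P_gen p (S m) 0.
Proof.
  set (x := P_gen p m 0).
  assert (Hx : 0 <= x <= 1) by (apply gw_event_bounds; auto).
  apply Rnot_lt_le. intros Hlt.
  set (e := x + p k0 * ((1 - x) * (1 - x)) - P_gen p (S m) 0).
  destruct (partial_sum_ev p p_prob (e/2) ltac:(unfold e; lra)) as [K HK].
  set (K' := max K k0). specialize (HK K' ltac:(unfold K'; lia)).
  pose proof (extinction_rec m K') as Hr. fold x in Hr.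
  (* termwise: p(k) x^k >= p(k) (1 + k (x - 1)), with an extra (1-x)^2 at k = k0 *)
  assert (Hg : Rsum (map (fun k => p k * (1 + INR k * (x - 1))
                                  + ind (Nat.eqb k k0) * (p k * ((1 - x) * (1 - x))))
                         (seq 0 (S K'))) <= Rsum (map (fun k => p k * x ^ k) (seq 0 (S K')))).
  { apply Rsum_map_le. intros k _. pose proof (p_nonneg k). destruct (Nat.eqb_spec k k0).
    - subst. simpl ind. pose proof (bernoulli_quadratic x k0 Hx Hk0). nra.
    - simpl ind. pose proof (bernoulli x k ltac:(lra)). nra. }
  rewrite Rsum_map_plus in Hg.
  rewrite (Rsum_seq_single (fun k => ind (Nat.eqb k k0) * (p k * ((1 - x) * (1 - x)))) (S K') k0)
    in Hg; [| unfold K'; lia |].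
  2:{ intros j Hj. cbv beta. rewrite (proj2 (Nat.eqb_neq j k0) Hj). simpl. ring. }
  rewrite Nat.eqb_refl in Hg. simpl ind in Hg.
  rewrite (Rsum_map_ext _ (fun k => p k + (x - 1) * (INR k * p k))) in Hg by (intros; ring).
  rewrite Rsum_map_plus, Rsum_map_scal in Hg.
  pose proof (partial_sum_le1 _ (fun n => Rmult_le_pos _ _ (pos_INR n) (p_nonneg n)) critical K').
  assert (0 <= Rsum (map (fun k => INR k * p k) (seq 0 (S K')))).
  { apply Rsum_map_ge0. intros. apply Rmult_le_pos; auto. apply pos_INR. }
  assert (0 <= (x - 1) * (Rsum (map (fun k => INR k * p k) (seq 0 (S K'))) - 1)) by nra.
  unfold e in HK. lra.
Qed.

Theorem extinction_cv : Un_cv (fun m => P_gen p m 0) 1.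
Proof.
  destruct exists_branching_degree as [k0 [Hk0 Hpk0]].
  apply (cv_to_one_quadratic _ (p k0)); auto.
  - intros m. apply gw_event_bounds; auto.
  - apply extinction_increment; auto.
Qed.

End Extinction.

Section JointLowerBound.

Variable p : nat -> R.
Hypothesis p_nonneg : forall n, 0 <= p n.
Hypothesis p_prob : infinite_sum p 1.

Lemma joint_trunc_branching n a h t M : (h <= n)%nat -> In t (trees_bd h M) ->
  Rsum (map (fun s => ind (tree_eqb (restr h s) t) * ind (Nat.eqb (gen n s) a) * gw_prob p n s)
            (trees_bd n M))
  = gw_prob p h t * forest_gen_mass p (n - h) a (gen h t) (trees_bd (n - h) M).
Proof.
  intros Hhn Ht.
  pose proof (branching_property p h n M [t] (fun x => ind (Nat.eqb x a)) Hhn) as G.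
  change (length [t]) with 1%nat in G. rewrite sum_lists_S in G.
  rewrite (Rsum_map_ext _ (fun s => ind (tree_eqb (restr h s) t) * ind (Nat.eqb (gen n s) a)
                                    * gw_prob p n s)) in G.
  2:{ intros x _. simpl. unfold forest_prob, forest_gen. simpl.
      rewrite andb_true_r, Nat.add_0_r. ring. }
  rewrite G by (intros t' [<- | []]; auto).
  replace (forest_gen h [t]) with (gen h t) by (unfold forest_gen; simpl; lia).
  replace (forest_prob p h [t]) with (gw_prob p h t) by (unfold forest_prob; simpl; ring).
  reflexivity.
Qed.

(* P(r_h(tau) = t, G_n(tau) = a) >= P(r_h(tau) = t) k P(G_{n-h} = a) P(G_{n-h} = 0)^(k-1)
   where k = G_h(t) >= 1: exactly one of the k subtrees above generation h survives. *)
Lemma joint_lower_bound n a h t k (Ha : (1 <= a)%nat) (Hhn : (h <= n)%nat)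
  (Hk : gen h t = S k) (HM : exists M, In t (trees_bd h M)) :
  gw_prob p h t * INR (S k) * P_gen p (n - h) a * (P_gen p (n - h) 0) ^ k <= P_joint p n a h t.
Proof.
  destruct HM as [M0 HM0].
  eapply cv_le_ev; [| apply P_joint_cv; auto |].
  - apply (CV_mult (fun M => gw_prob p h t * INR (S k) * gen_mass p (n - h) a (trees_bd (n - h) M))).
    + apply CV_mult; [apply cv_const | apply P_gen_cv; auto].
    + apply cv_pow, P_gen_cv; auto.
  - exists M0. intros M HM. cbv beta.
    rewrite joint_trunc_branching, Hk by (auto; eapply In_trees_bd_mono; eauto).
    rewrite !Rmult_assoc. apply Rmult_le_compat_l; [apply gw_prob_nonneg; auto |].
    rewrite <- !Rmult_assoc. apply one_survivor_lower; auto.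
Qed.

End JointLowerBound.

(** * From lower bounds and a total-mass bound to convergence *)

(* If a_n(s) is eventually >= b(s) - d for every s of a finite list L, the total
   a-mass of L is eventually <= 1, and the b-mass of L is >= 1 - e/2, then a_n(t)
   is eventually e-close to b(t) for every t in L: no mass is left for an excess. *)
Lemma close_of_lower_bounds_and_mass {A} (a : nat -> A -> R) (b : A -> R) (L : list A) t e :
  0 < e -> In t L ->
  (forall d, 0 < d -> forall s, In s L -> exists N, forall n, (N <= n)%nat -> b s - d <= a n s) ->
  (exists N, forall n, (N <= n)%nat -> Rsum (map (a n) L) <= 1) ->
  1 - e / 2 <= Rsum (map b L) ->
  exists N, forall n, (N <= n)%nat -> Rabs (a n t - b t) < e.
Proof.
  intros He Ht Hlow [N0 Hmass] Hb.
  set (c := INR (length L) + 1).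
  assert (Hc : 1 <= c) by (unfold c; pose proof (pos_INR (length L)); lra).
  set (d := e / (4 * c)).
  assert (Hd0 : 0 < d) by (unfold d; apply Rdiv_lt_0_compat; lra).
  assert (Hdc : d * c = e / 4) by (unfold d; field; lra).
  assert (Hd : d <= e / 4 /\ INR (length L) * d <= e / 4) by (unfold c in *; split; nra).
  destruct (eventually_forall_in (fun n s => b s - d <= a n s) L (Hlow d Hd0)) as [N1 HN1].
  exists (max N0 N1). intros n Hn.
  specialize (Hmass n ltac:(lia)). specialize (HN1 n ltac:(lia)).
  (* the excess of a_n(t) over b(t) is bounded by the total excess on L *)
  assert (Hex : a n t + (-1) * b t + d <= Rsum (map (fun s => a n s + (-1) * b s + d) L)).
  { apply (Rsum_ge_term (fun s => a n s + (-1) * b s + d)); auto.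
    intros s Hs. specialize (HN1 s Hs). lra. }
  rewrite !Rsum_map_plus, Rsum_map_scal, Rsum_const_len in Hex.
  specialize (HN1 t Ht). apply Rabs_def1; lra.
Qed.

Lemma ratio_shift_cv p (alpha : nat -> nat) N0 (HN0 : forall n, (N0 <= n)%nat -> 0 < P_gen p n (alpha n))
  (ratio : forall j, (0 < j)%nat ->
     Un_cv (fun n => P_gen p (n - j) (alpha n) / P_gen p n (alpha n)) 1) h :
  Un_cv (fun n => P_gen p (n - h) (alpha n) / P_gen p n (alpha n)) 1.
Proof.
  destruct h; [| apply ratio; lia].
  eapply cv_ev_eq; [| apply cv_const]. exists N0. intros n Hn. rewrite Nat.sub_0_r.
  specialize (HN0 n Hn). field. lra.
Qed.

Lemma conditional_liminf p (p_nonneg : forall n, 0 <= p n) (p_prob : infinite_sum p 1)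
  (p01 : p 0%nat + p 1%nat < 1) (critical : infinite_sum (fun n => INR n * p n) 1)
  (alpha : nat -> nat) (alpha_pos : forall n, (0 < alpha n)%nat)
  N0 (HN0 : forall n, (N0 <= n)%nat -> 0 < P_gen p n (alpha n))
  (ratio : forall j, (0 < j)%nat ->
     Un_cv (fun n => P_gen p (n - j) (alpha n) / P_gen p n (alpha n)) 1) h t :
  forall e, 0 < e -> exists N, forall n, (N <= n)%nat ->
    kesten_prob p 1 h t - e <= P_joint p n (alpha n) h t / P_gen p n (alpha n).
Proof.
  intros e He. rewrite kesten_size_biased.
  assert (Hnn : forall n, (N0 <= n)%nat -> 0 <= P_joint p n (alpha n) h t / P_gen p n (alpha n)).
  { intros n Hn. unfold Rdiv. apply Rmult_le_pos; [apply gw_event_bounds; auto |].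
    left. apply Rinv_0_lt_compat. auto. }
  destruct (Req_dec (gw_prob p h t) 0) as [Hz | Hnz].
  { exists N0. intros n Hn. rewrite Hz. specialize (Hnn n Hn). lra. }
  destruct (gen h t) as [|k] eqn:Hk.
  { exists N0. intros n Hn. specialize (Hnn n Hn). simpl INR. lra. }
  assert (Hl : Un_cv (fun n => gw_prob p h t * INR (S k)
                               * (P_gen p (n - h) (alpha n) / P_gen p n (alpha n))
                               * (P_gen p (n - h) 0) ^ k) (gw_prob p h t * INR (S k) * 1 * 1 ^ k)).
  { apply CV_mult; [apply CV_mult; [apply cv_const | eapply ratio_shift_cv; eauto] |].
    apply cv_pow, (cv_shift (fun m => P_gen p m 0)), extinction_cv; auto. }
  destruct (Hl e He) as [N1 HN1].
  exists (max N0 (max N1 h)). intros n Hn.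
  specialize (HN1 n ltac:(lia)). unfold R_dist in HN1. apply Rabs_def2 in HN1.
  rewrite pow1, Rmult_1_r in HN1.
  pose proof (HN0 n ltac:(lia)) as HP.
  pose proof (joint_lower_bound p p_nonneg p_prob n (alpha n) h t k ltac:(specialize (alpha_pos n); lia)
                ltac:(lia) Hk (gw_support p h t Hnz)) as HL.
  assert (gw_prob p h t * INR (S k) * (P_gen p (n - h) (alpha n) / P_gen p n (alpha n))
            * P_gen p (n - h) 0 ^ k <= P_joint p n (alpha n) h t / P_gen p n (alpha n)).
  { apply Rle_trans with ((gw_prob p h t * INR (S k) * P_gen p (n - h) (alpha n)
                           * P_gen p (n - h) 0 ^ k) / P_gen p n (alpha n)).
    - right. field. lra.
    - unfold Rdiv. apply Rmult_le_compat_r; auto. left. apply Rinv_0_lt_compat; auto. }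
  lra.
Qed.

Theorem proposition6p1
  (p : nat -> R)
  (p_nonneg : forall n, 0 <= p n)
  (p_prob : infinite_sum p 1)
  (p0_pos : 0 < p 0%nat)
  (p01 : p 0%nat + p 1%nat < 1)
  (critical : infinite_sum (fun n => INR n * p n) 1)
  (alpha : nat -> nat)
  (alpha_pos : forall n, (0 < alpha n)%nat)
  (cond_def : exists N, forall n, (N <= n)%nat -> 0 < P_gen p n (alpha n))
  (ratio : forall j, (0 < j)%nat ->
     Un_cv (fun n => P_gen p (n - j) (alpha n) / P_gen p n (alpha n)) 1) :
  forall (h : nat) (t : tree),
    Un_cv (fun n => P_joint p n (alpha n) h t / P_gen p n (alpha n))
          (kesten_prob p 1 h t).
Proof.
  intros h t. destruct cond_def as [N0 HN0].
  (* trees that are not degree-bounded have probability 0 under both laws *)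
  destruct (classic (exists M, In t (trees_bd h M))) as [[M0 HM0] | HnM].
  2:{ assert (Hgw : gw_prob p h t = 0).
      { apply NNPP. intros Hnz. apply HnM, (gw_support p h t Hnz). }
      rewrite kesten_size_biased, Hgw, Rmult_0_r.
      eapply cv_ev_eq; [| apply cv_const]. exists 0%nat. intros n _.
      rewrite P_joint_zero; auto. unfold Rdiv. ring. }
  (* otherwise, take L = trees_bd h M with Kesten mass >= 1 - e/2 and containing t *)
  intros e He.
  destruct (gw_mean_ev p p_nonneg p_prob critical h (e/2) ltac:(lra)) as [Nm HNm].
  set (L := trees_bd h (max M0 Nm)).
  apply (close_of_lower_bounds_and_mass (fun n s => P_joint p n (alpha n) h s / P_gen p n (alpha n))
           (kesten_prob p 1 h) L t e He).
  - unfold L. eapply In_trees_bd_mono; eauto; lia.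
  - intros d Hd s _. eapply conditional_liminf; eauto.
  - exists (max N0 h). intros n Hn. pose proof (HN0 n ltac:(lia)).
    unfold Rdiv. rewrite Rsum_map_scal_r.
    apply (Rmult_le_reg_r (P_gen p n (alpha n))); auto.
    rewrite Rmult_assoc, Rinv_l, Rmult_1_r, Rmult_1_l by lra.
    apply P_joint_mass_le; auto; lia.
  - rewrite (Rsum_map_ext _ (fun s => INR (gen h s) * gw_prob p h s))
      by (intros; apply kesten_size_biased).
    apply HNm. lia.
Qed.
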